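(* Let $k\in\mathbb{R}$ and $\epsilon\in(0,1)$. There exists a polynomial $p_{\mathrm{gauss},k,n}$ of degree $$n=\left\lceil\sqrt{8\left\lceil\max\{\ln(2/\epsilon),\,k^2e^2/2\}\right\rceil\ln(4/\epsilon)}\right\rceil$$ such that $\max_{x\in[-1,1]}\left|p_{\mathrm{gauss},k,n}(x)-e^{-(kx)^2}\right|\le\epsilon$. *)

From HB Require Import structures.
From mathcomp Require Import all_boot all_order all_algebra.
From mathcomp Require Import all_classical all_reals all_analysis.
Set Implicit Arguments. Unset Strict Implicit. Unset Printing Implicit Defensive.
Import Order.TTheory GRing.Theory Num.Theory.
Local Open Scope ring_scope.

(* n = ceil( sqrt( 8 * ceil(max(ln(2/eps), k^2 e^2 / 2)) * ln(4/eps) ) ),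
   as a natural number (the outer ceiling is nonnegative). *)
Definition gauss_deg (R : realType) (k eps : R) : nat :=
  `| Num.ceil (Num.sqrt
        (8 * (Num.ceil (Num.max (ln (2 / eps))
                                (k ^+ 2 * expR 1 ^+ 2 / 2)))%:~R
           * ln (4 / eps))) |%N.

From HB Require Import structures.
From mathcomp Require Import all_boot all_order all_algebra.
From mathcomp Require Import all_classical all_reals all_analysis.
From mathcomp Require Import zify ring lra.
Import Order.TTheory GRing.Theory Num.Theory numFieldNormedType.Exports.
Set Implicit Arguments. Unset Strict Implicit. Unset Printing Implicit Defensive.
Local Open Scope classical_set_scope.
Local Open Scope ring_scope.

(* With [lam = k^2/2] and [w = 2x^2 - 1 = T_2(x)], [exp (-(kx)^2) = exp (-lam) exp (-lam w)].
   Truncating the exponential series after [b] terms costs at most [exp (-b)] as soon as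
   [lam e^2 <= b], since [lam^i / i! <= e^-(i+1)] by [i! >= e (i/e)^i].  Each power [w^i]
   is an average of Chebyshev polynomials [T_(2|i-2j|)] with binomial weights; dropping
   those of degree above [n] discards a binomial tail, which the Chernoff bound (with
   [cosh mu <= exp (mu^2/2)]) makes at most [2 exp (-n^2/(8i))].  The choice of [b] and
   [n] in [gauss_deg] makes both errors at most [eps/2]. *)

Section exp_series.
Variable R : realType.
Implicit Types (x u C : R) (N b : nat).

Lemma exp_partial_sum_le_expR x N : 0 <= x ->
  \sum_(0 <= i < N) exp_coeff x i <= expR x.
Proof.
move=> x0; apply: nondecreasing_cvgn_le; last exact: is_cvg_series_exp_coeff.
by apply: nondecreasing_series => n _ _; exact: exp_coeff_ge0.
Qed.

Lemma dist_expR_partial_sum_le u b C :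
    (forall N, (b <= N)%N -> `|\sum_(b <= i < N) exp_coeff u i| <= C) ->
  `|expR u - \sum_(0 <= i < b) exp_coeff u i| <= C.
Proof.
move=> tailC; set S := \sum_(0 <= i < b) exp_coeff u i.
have cvS : `|series (exp_coeff u) N - S| @[N --> \oo] --> `|expR u - S|.
  by apply: cvg_norm; apply: cvgB; [exact: is_cvg_series_exp_coeff | exact: cvg_cst].
apply: (cvgr_to_le cvS); near=> N.
have bN : (b <= N)%N by near: N; exists b.
by rewrite /series /= (@big_cat_nat _ _ _ b) //= addrAC subrr add0r tailC.
Unshelve. all: by end_near.
Qed.

Lemma expn2_fact_le_fact_double m : (2 ^ m * m`! <= (m.*2)`!)%N.
Proof.
elim: m => // m IH; rewrite doubleS !factS expnS.
have : (2 ^ m * m`! * ((m.*2).+2 * (m.*2).+1) <= (m.*2)`! * ((m.*2).+2 * (m.*2).+1))%N.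
  by rewrite leq_mul2r IH orbT.
nia.
Qed.

Definition cosh_coeff x i := exp_coeff x i + exp_coeff (- x) i.

Lemma cosh_coeff_ge0 x i : 0 <= cosh_coeff x i.
Proof.
rewrite /cosh_coeff /exp_coeff /= -mulrDl; apply: divr_ge0 => //.
rewrite -(odd_double_half i); case: (odd i) => /=.
  by rewrite -!mul2n !exprS !exprM sqrrN mulNr addrN.
by rewrite add0n -!mul2n !exprM sqrrN -mulr2n mulrn_wge0 // exprn_ge0 // sqr_ge0.
Qed.

Lemma cosh_coeff_double x m : cosh_coeff x m.*2 = 2 * ((x ^+ 2) ^+ m / (m.*2)`!%:R).
Proof. by rewrite /cosh_coeff /exp_coeff /= -mulrDl -!mul2n !exprM sqrrN; ring. Qed.

Lemma cosh_coeff_doubleS x m : cosh_coeff x (m.*2).+1 = 0.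
Proof.
by rewrite /cosh_coeff /exp_coeff /= -mulrDl !exprS -!mul2n !exprM sqrrN mulNr addrN mul0r.
Qed.

Lemma cvg_series_cosh_coeff x : series (cosh_coeff x) @ \oo --> expR x + expR (- x).
Proof.
have -> : series (cosh_coeff x) = series (exp_coeff x) \+ series (exp_coeff (- x)).
  by apply/funext => N; rewrite /series /= big_split.
by rewrite /expR; apply: cvgD; exact: is_cvg_series_exp_coeff.
Qed.

Lemma expR_add_expRN_le x : expR x + expR (- x) <= 2 * expR (x ^+ 2 / 2).
Proof.
apply: (cvgr_to_le (@cvg_series_cosh_coeff x)); near=> N; rewrite /series /=.
have sum_double M : \sum_(0 <= i < M.*2) cosh_coeff x i
    = \sum_(0 <= m < M) 2 * ((x ^+ 2) ^+ m / (m.*2)`!%:R).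
  elim: M => [|M IH]; first by rewrite !big_geq.
  by rewrite doubleS !big_nat_recr //= IH cosh_coeff_doubleS addr0 cosh_coeff_double.
apply: (@le_trans _ _ (\sum_(0 <= i < N.*2) cosh_coeff x i)).
  rewrite [leRHS](@big_cat_nat _ _ _ N) //=; last by rewrite -addnn leq_addr.
  by rewrite lerDl; apply: sumr_ge0 => i _; exact: cosh_coeff_ge0.
rewrite sum_double -mulr_sumr ler_pM2l //.
apply: le_trans (exp_partial_sum_le_expR N _); last by rewrite divr_ge0 // sqr_ge0.
apply: ler_sum => m _; rewrite /exp_coeff /= expr_div_n -mulrA.
apply: ler_wpM2l; first exact: exprn_ge0 (sqr_ge0 x).
rewrite -invfM -natrX -natrM lef_pV2 ?posrE ?ltr0n ?fact_gt0 ?muln_gt0 ?expn_gt0 ?fact_gt0 //.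
by rewrite ler_nat expn2_fact_le_fact_double.
Unshelve. all: by end_near.
Qed.

End exp_series.

Section binomial_tail.
Variable R : realType.

Lemma sum_binomial_expR i (mu : R) :
  \sum_(j < i.+1) 'C(i, j)%:R * expR (mu * (i%:R - 2 * j%:R)) = (expR mu + expR (- mu)) ^+ i.
Proof.
rewrite exprDn; apply: eq_bigr => j _.
have ji : (j <= i)%N by rewrite -ltnS.
rewrite -[RHS]mulr_natl -!expRM_natl -expRD natrB //; congr (_ * expR _); ring.
Qed.

Lemma binomial_tail_le i (D : R) : (0 < i)%N -> 0 <= D ->
  (2 ^+ i)^-1 * \sum_(j < i.+1 | D < `|i%:R - 2 * j%:R|) 'C(i, j)%:R
    <= 2 * expR (- D ^+ 2 / (2 * i%:R)).
Proof.
move=> i_gt0 D_ge0; set mu := D / i%:R.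
have mu_ge0 : 0 <= mu by rewrite divr_ge0.
have i0 : i%:R != 0 :> R by rewrite pnatr_eq0 -lt0n.
pose f (e : R) := (expR (mu * e) + expR (- mu * e)) * expR (- (mu * D)).
have f_ge1 e : D < `|e| -> 1 <= f e.
  move=> De; rewrite /f mulrDl -!expRD.
  have [e0|e0] := leP 0 e.
    rewrite ger0_norm // in De.
    rewrite -[1]addr0 lerD ?expR_ge0 // -expR0 ler_expR subr_ge0.
    by rewrite ler_wpM2l // ltW.
  rewrite ltr0_norm // in De.
  rewrite -[1]add0r lerD ?expR_ge0 // -expR0 ler_expR subr_ge0 mulNr -mulrN.
  by rewrite ler_wpM2l // ltW.
have tail_le : \sum_(j < i.+1 | D < `|i%:R - 2 * j%:R|) 'C(i, j)%:R
    <= \sum_(j < i.+1) 'C(i, j)%:R * f (i%:R - 2 * j%:R).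
  rewrite big_mkcond /=; apply: ler_sum => j _.
  case: ifP => [/f_ge1 le1f|_]; first by rewrite ler_peMr.
  by rewrite mulr_ge0 // mulr_ge0 ?expR_ge0 // addr_ge0 ?expR_ge0.
have sum_f : \sum_(j < i.+1) 'C(i, j)%:R * f (i%:R - 2 * j%:R)
    = 2 * (expR mu + expR (- mu)) ^+ i * expR (- (mu * D)).
  rewrite /f; under eq_bigr do rewrite mulrA mulrDr.
  rewrite -mulr_suml big_split /= sum_binomial_expR sum_binomial_expR opprK.
  by rewrite [expR (- mu) + _]addrC; ring.
rewrite ler_pdivrMl ?exprn_gt0 //; apply: (le_trans tail_le); rewrite sum_f.
apply: (@le_trans _ _ (2 * (2 * expR (mu ^+ 2 / 2)) ^+ i * expR (- (mu * D)))).
  rewrite ler_wpM2r ?expR_ge0 // ler_wpM2l // lerXn2r ?nnegrE ?addr_ge0 ?expR_ge0 //.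
  exact: expR_add_expRN_le.
rewrite exprMn -expRM_natl mulrCA -!mulrA ler_wpM2l ?exprn_ge0 // ler_wpM2l //.
by rewrite -expRD ler_expR le_eqVlt; apply/orP; left; apply/eqP; field.
Qed.

End binomial_tail.

Section chebyshev.
Variable R : realType.
Implicit Types (a t : R) (m i : nat).

Fixpoint cheb m : {poly R} :=
  if m is m1.+1 then
    if m1 is m2.+1 then 'X * cheb m1 *+ 2 - cheb m2 else 'X
  else 1.

Lemma chebSS m : cheb m.+2 = 'X * cheb m.+1 *+ 2 - cheb m.
Proof. by []. Qed.

Lemma size_cheb m : (size (cheb m) <= m.+1)%N.
Proof.
suff : (size (cheb m) <= m.+1)%N /\ (size (cheb m.+1) <= m.+2)%N by case.
elim: m => [|m [IHm IHm1]]; first by rewrite size_poly1 size_polyX.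
split => //; rewrite chebSS; apply: leq_trans (size_polyD _ _) _.
rewrite size_polyN geq_max; apply/andP; split; last by apply: leq_trans IHm _; lia.
rewrite mulr2n.
apply: leq_trans (size_polyD _ _) _; rewrite maxnn.
by apply: leq_trans (size_polyMleq _ _) _; rewrite size_polyX.
Qed.

Lemma cosD_add_cosB a t : cos (a + t) + cos (a - t) = 2 * cos a * cos t.
Proof. by rewrite cosD cosB; ring. Qed.

Lemma cheb_cos m t : (cheb m).[cos t] = cos (m%:R * t).
Proof.
suff : (cheb m).[cos t] = cos (m%:R * t) /\ (cheb m.+1).[cos t] = cos (m.+1%:R * t).
  by case.
elim: m => [|m [IHm IHm1]]; first by rewrite hornerC hornerX mul0r cos0 mul1r.
split => //; rewrite chebSS hornerD hornerN hornerMn hornerM hornerX IHm IHm1.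
have -> : m.+2%:R * t = m.+1%:R * t + t by rewrite -addn1 natrD; ring.
have -> : m%:R * t = m.+1%:R * t - t by rewrite -addn1 natrD; ring.
by apply/eqP; rewrite subr_eq cosD_add_cosB -mulr_natl; apply/eqP; ring.
Qed.

Lemma sum_binS (F : nat -> R) i :
  \sum_(0 <= j < i.+2) 'C(i.+1, j)%:R * F j
    = \sum_(0 <= j < i.+1) 'C(i, j)%:R * (F j + F j.+1).
Proof.
under [RHS]eq_bigr do rewrite mulrDr.
rewrite big_split /= big_nat_recl // bin0 mul1r.
under eq_bigr do rewrite binS natrD mulrDl.
rewrite big_split /= [in RHS]big_nat_recl // bin0 mul1r.
by rewrite [in LHS]big_nat_recr //= bin_small // mul0r addr0 addrA.
Qed.

Lemma cos_expr t i :
  cos t ^+ i = (2 ^+ i)^-1 * \sum_(0 <= j < i.+1) 'C(i, j)%:R * cos ((i%:R - 2 * j%:R) * t).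
Proof.
elim: i => [|i IH]; first by rewrite big_nat1 invr1 !mul1r mulr0 subr0 mul0r cos0.
rewrite exprS IH sum_binS exprS invfM -[RHS]mulrA [RHS]mulrCA [LHS]mulrCA.
congr (_ * _); rewrite !mulr_sumr; apply: eq_big_nat => j _.
rewrite mulrCA [RHS]mulrCA; congr (_ * _).
have <- : (i%:R - 2 * j%:R) * t + t = (i.+1%:R - 2 * j%:R) * t by rewrite -addn1 natrD; ring.
have <- : (i%:R - 2 * j%:R) * t - t = (i.+1%:R - 2 * j.+1%:R) * t.
  by rewrite -addn1 natrD -(addn1 j) natrD; ring.
by rewrite cosD_add_cosB; field.
Qed.

Lemma cos_normrM a t : cos (`|a| * t) = cos (a * t) :> R.
Proof.
have [a_ge0|a_lt0] := leP 0 a; first by rewrite ger0_norm.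
by rewrite ltr0_norm // mulNr cosN.
Qed.

End chebyshev.

Section exp_truncation.
Variable R : realType.
Implicit Types (lam u : R) (i b N : nat).

Lemma expr_1Dinv_le_expR1 i : (0 < i)%N -> (1 + i%:R^-1) ^+ i <= expR 1 :> R.
Proof.
move=> i_gt0; apply: (@le_trans _ _ (expR (i%:R^-1) ^+ i)).
  by rewrite lerXn2r ?nnegrE ?addr_ge0 ?expR_ge0 ?invr_ge0 // expR_ge1Dx.
by rewrite -expRM_natl mulfV // pnatr_eq0 -lt0n.
Qed.

Lemma fact_ge_stirling i : (0 < i)%N -> (i%:R / expR 1) ^+ i * expR 1 <= i`!%:R :> R.
Proof.
have e_gt0 : 0 < expR 1 :> R by exact: expR_gt0.
elim: i => [//|[|i] IH] _; first by rewrite expr1 mulfVK ?gt_eqF // fact0 mul1n.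
move: IH => /(_ isT); set m := i.+1 => IH.
have m_gt0 : 0 < m%:R :> R by rewrite ltr0n.
have step : (m.+1%:R / expR 1) ^+ m <= expR 1 * (m%:R / expR 1) ^+ m :> R.
  have -> : m.+1%:R / expR 1 = m%:R / expR 1 * (1 + m%:R^-1) :> R.
    by rewrite -addn1 natrD; field; rewrite !gt_eqF.
  rewrite exprMn mulrC; apply: ler_wpM2r; last exact: expr_1Dinv_le_expR1.
  by rewrite exprn_ge0 // divr_ge0 // ltW.
rewrite factS natrM exprS -mulrA.
apply: (@le_trans _ _ (m.+1%:R / expR 1 * (expR 1 * (m%:R / expR 1) ^+ m * expR 1))).
  apply: ler_wpM2l; first by rewrite divr_ge0 // ltW.
  by apply: ler_wpM2r; [exact: ltW | exact: step].
have -> : m.+1%:R / expR 1 * (expR 1 * (m%:R / expR 1) ^+ m * expR 1)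
    = m.+1%:R * ((m%:R / expR 1) ^+ m * expR 1) :> R.
  by field; rewrite gt_eqF.
exact: ler_wpM2l.
Qed.

Lemma exp_coeff_le_expRN lam i : 0 <= lam -> (0 < i)%N -> lam * expR 1 ^+ 2 <= i%:R ->
  exp_coeff lam i <= expR (-1) ^+ i.+1.
Proof.
move=> lam_ge0 i_gt0 lam_le.
have e_gt0 : 0 < expR 1 :> R by exact: expR_gt0.
rewrite /exp_coeff /= ler_pdivrMr ?ltr0n ?fact_gt0 //.
apply: (@le_trans _ _ (expR (-1) ^+ i.+1 * ((i%:R / expR 1) ^+ i * expR 1))); last first.
  by apply: ler_wpM2l; rewrite ?exprn_ge0 ?expR_ge0 ?fact_ge_stirling.
have -> : expR (-1) ^+ i.+1 * ((i%:R / expR 1) ^+ i * expR 1)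
    = (i%:R / expR 1 ^+ 2) ^+ i :> R.
  rewrite expRN !expr_div_n exprS exprMn exprVn.
  by field; rewrite ?expf_neq0 ?gt_eqF.
by rewrite lerXn2r ?nnegrE ?divr_ge0 ?exprn_ge0 ?ler_pdivlMr ?exprn_gt0.
Qed.

Lemma sum_expRN1_le b N :
  \sum_(b <= i < N) expR (-1) ^+ i.+1 <= expR (- b%:R) :> R.
Proof.
set q := expR (-1) : R.
have q_gt0 : 0 < q by exact: expR_gt0.
have q_le_half : q <= 2^-1.
  rewrite /q expRN lef_pV2 ?posrE ?expR_gt0 //.
  by have := expR_ge1Dx (1 : R); rewrite -[1 + 1]/(2%:R).
have [bN|Nb] := leqP b N; last by rewrite big_geq ?expR_ge0 // ltnW.
rewrite -(mulrN1 b%:R) expRM_natl -/q.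
under eq_bigr do rewrite exprS.
rewrite -mulr_sumr -(subnKC bN) geometric_partial_tail.
apply: (@le_trans _ _ (q * (q ^+ b * (1 - q)^-1))).
  apply: ler_wpM2l; first exact: ltW.
  by apply: geometric_le_lim; rewrite ?exprn_ge0 ?gtr0_norm ?expR_lt1 ?ltrN10 // ltW.
rewrite mulrCA ger_pMr ?exprn_gt0 // ler_pdivrMr ?subr_gt0 ?expR_lt1 ?ltrN10 //.
lra.
Qed.

Lemma dist_expR_partial_sum_le_expRN lam u b :
    `|u| <= lam -> (0 < b)%N -> lam * expR 1 ^+ 2 <= b%:R ->
  `|expR u - \sum_(0 <= i < b) exp_coeff u i| <= expR (- b%:R).
Proof.
move=> u_le b_gt0 lam_le; have lam_ge0 := le_trans (normr_ge0 u) u_le.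
apply: dist_expR_partial_sum_le => N _.
apply: le_trans (ler_norm_sum _ _ _) _; apply: le_trans (sum_expRN1_le b N).
apply: ler_sum_nat => i /andP[bi _]; apply: (@le_trans _ _ (exp_coeff lam i)).
  rewrite /exp_coeff /= normrM normrX normfV normr_nat.
  by apply: ler_wpM2r; rewrite ?invr_ge0 // lerXn2r ?nnegrE.
apply: exp_coeff_le_expRN => //; first exact: leq_trans b_gt0 bi.
by apply: le_trans lam_le _; rewrite ler_nat.
Qed.

End exp_truncation.

Section gaussian_approximation.
Variable R : realType.
Implicit Types (x lam delta : R) (n i b : nat).

Lemma natr_distn (i j : nat) : (`|i - j|%N)%:R = `|i%:R - j%:R| :> R.
Proof. by rewrite natr_absz intr_norm rmorphB. Qed.

(* Expanding [T_2(x) ^+ i = (2 x^2 - 1) ^+ i] in Chebyshev polynomials by [cos_expr]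
   gives [2^-i \sum_j 'C(i, j) T_(2|i - 2j|)]; keep the terms of degree at most [n]. *)
Definition cheb2_pow_trunc n i : {poly R} :=
  (2 ^+ i)^-1 *: \sum_(0 <= j < i.+1 | (2 * `|i - 2 * j| <= n)%N)
    'C(i, j)%:R *: cheb R (2 * `|i - 2 * j|).

Lemma size_cheb2_pow_trunc n i : (size (cheb2_pow_trunc n i) <= n.+1)%N.
Proof.
apply: leq_trans (size_scale_leq _ _) _; apply: leq_trans (size_sum _ _ _) _.
apply/bigmax_leqP_seq => j _ le_n.
by apply: leq_trans (size_scale_leq _ _) _; apply: leq_trans (size_cheb _ _) _.
Qed.

Lemma cheb2_pow_trunc_err n i x : -1 <= x <= 1 ->
  `|(cheb2_pow_trunc n i).[x] - (2 * x ^+ 2 - 1) ^+ i|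
    <= (2 ^+ i)^-1 * \sum_(j < i.+1 | (n%:R / 2 : R) < `|i%:R - 2 * j%:R|) 'C(i, j)%:R.
Proof.
case/acos_def => _ <-; set t := acos x.
pose d (j : nat) := `|i - 2 * j|%N.
pose G j := 'C(i, j)%:R * cos ((2 * d j)%:R * t).
have trunc_eq : (cheb2_pow_trunc n i).[cos t]
    = (2 ^+ i)^-1 * \sum_(0 <= j < i.+1 | (2 * d j <= n)%N) G j.
  rewrite hornerZ horner_sum; congr (_ * _); apply: eq_bigr => j _.
  by rewrite hornerZ cheb_cos.
have pow_eq : (2 * cos t ^+ 2 - 1) ^+ i = (2 ^+ i)^-1 * \sum_(0 <= j < i.+1) G j.
  rewrite mulr_natl -cos_mulr2n cos_expr; congr (_ * _); apply: eq_bigr => j _.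
  rewrite /G natrM natr_distn natrM -[in LHS]cos_normrM.
  by congr (_ * cos _); rewrite mulr_natr; ring.
rewrite trunc_eq pow_eq [\sum_(0 <= j < i.+1) G j](bigID (fun j => (2 * d j <= n)%N)) /=.
rewrite mulrDr opprD addrA.
rewrite subrr add0r normrN normrM ger0_norm ?invr_ge0 ?exprn_ge0 //.
apply: ler_wpM2l; first by rewrite invr_ge0 exprn_ge0.
rewrite big_mkord; apply: le_trans (ler_norm_sum _ _ _) _.
have dropped (j : nat) : ~~ (2 * d j <= n)%N = ((n%:R / 2 : R) < `|i%:R - 2 * j%:R|).
  by rewrite -ltnNge ltr_pdivrMr // -natrM -natr_distn -natrM ltr_nat mulnC.
rewrite [leLHS](eq_bigl (fun j : 'I_i.+1 => (n%:R / 2 : R) < `|i%:R - 2 * j%:R|)).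
  by apply: ler_sum => j _; rewrite normrM ger0_norm // ler_piMr ?cos_max.
exact: dropped.
Qed.

Definition gauss_poly lam b n : {poly R} :=
  expR (- lam) *: \sum_(0 <= i < b) exp_coeff (- lam) i *: cheb2_pow_trunc n i.

Lemma size_gauss_poly lam b n : (size (gauss_poly lam b n) <= n.+1)%N.
Proof.
apply: leq_trans (size_scale_leq _ _) _; apply: leq_trans (size_sum _ _ _) _.
apply/bigmax_leqP_seq => i _ _.
exact: leq_trans (size_scale_leq _ _) (size_cheb2_pow_trunc n i).
Qed.

Lemma dist_sum_exp_coeff_le lam w b (q : nat -> R) delta : 0 <= lam -> 0 <= delta ->
    (forall i, (i < b)%N -> `|q i - w ^+ i| <= delta) ->
  `|\sum_(0 <= i < b) exp_coeff (- lam) i * q i - \sum_(0 <= i < b) exp_coeff (- lam * w) i|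
    <= expR lam * delta.
Proof.
move=> lam_ge0 delta_ge0 q_near; rewrite -sumrB; apply: le_trans (ler_norm_sum _ _ _) _.
apply: (@le_trans _ _ (\sum_(0 <= i < b) exp_coeff lam i * delta)).
  apply: ler_sum_nat => i /andP[_ ib].
  have -> : exp_coeff (- lam) i * q i - exp_coeff (- lam * w) i
      = exp_coeff (- lam) i * (q i - w ^+ i) by rewrite /exp_coeff /= exprMn; ring.
  rewrite normrM; apply: ler_pM => //; last exact: q_near.
  by rewrite /exp_coeff /= normrM normrX normrN normfV normr_nat ger0_norm.
rewrite -mulr_suml; apply: ler_wpM2r => //; exact: exp_partial_sum_le_expR.
Qed.

Lemma gauss_poly_err lam b n delta x :
    0 <= lam -> (0 < b)%N -> lam * expR 1 ^+ 2 <= b%:R -> 0 <= delta ->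
    (forall i, (0 < i < b)%N -> 2 * expR (- (n%:R / 2) ^+ 2 / (2 * i%:R)) <= delta) ->
    -1 <= x <= 1 ->
  `|(gauss_poly lam b n).[x] - expR (- (2 * lam) * x ^+ 2)| <= delta + expR (- b%:R).
Proof.
move=> lam_ge0 b_gt0 lam_le delta_ge0 tail_le x_in.
set w := 2 * x ^+ 2 - 1; set u := - lam * w.
have w_le1 : `|w| <= 1.
  by case/andP: x_in => ? ?; rewrite ler_norml /w; apply/andP; split; nra.
have u_le : `|u| <= lam by rewrite normrM normrN (ger0_norm lam_ge0); exact: ler_piMr.
have cheb_err i : (i < b)%N -> `|(cheb2_pow_trunc n i).[x] - w ^+ i| <= delta.
  move=> ib; apply: le_trans (cheb2_pow_trunc_err n i x_in) _.
  case: i ib => [|i] ib.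
    rewrite big_pred0 ?mulr0 // => j.
    by rewrite ord1 /= mulr0 subr0 normr0 ltNge divr_ge0.
  have n_half_ge0 : 0 <= n%:R / 2 :> R by rewrite divr_ge0.
  exact: le_trans (binomial_tail_le (ltn0Sn i) n_half_ge0) (tail_le i.+1 ib).
have -> : (gauss_poly lam b n).[x] - expR (- (2 * lam) * x ^+ 2)
    = expR (- lam) * (\sum_(0 <= i < b) exp_coeff (- lam) i * (cheb2_pow_trunc n i).[x]
                       - \sum_(0 <= i < b) exp_coeff u i)
      + expR (- lam) * (\sum_(0 <= i < b) exp_coeff u i - expR u).
  have -> : expR (- (2 * lam) * x ^+ 2) = expR (- lam) * expR u.
    by rewrite -expRD /u /w; congr expR; ring.
  rewrite hornerZ horner_sum; under eq_bigr do rewrite hornerZ.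
  ring.
apply: le_trans (ler_normD _ _) _; rewrite !normrM ger0_norm ?expR_ge0 //.
apply: lerD.
  have := dist_sum_exp_coeff_le (q := fun i => (cheb2_pow_trunc n i).[x])
    lam_ge0 delta_ge0 cheb_err.
  move=> /(ler_wpM2l (expR_ge0 (- lam))) /le_trans; apply.
  by rewrite mulrA -expRD addNr expR0 mul1r.
rewrite distrC; apply: le_trans (dist_expR_partial_sum_le_expRN u_le b_gt0 lam_le).
by rewrite ler_piMl ?normr_ge0 // expR_le1 oppr_le0.
Qed.

End gaussian_approximation.

Lemma absz_ceil_ge (R : realType) (x : R) : x <= (`|Num.ceil x|%N)%:R.
Proof. by rewrite natr_absz intr_norm (le_trans (ceil_ge x)) ?ler_norm. Qed.

Section gauss_degree.
Variables (R : realType) (k eps : R).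
Hypotheses (eps_gt0 : 0 < eps) (eps_lt1 : eps < 1).

Definition gauss_terms : nat :=
  `|Num.ceil (Num.max (ln (2 / eps)) (k ^+ 2 * expR 1 ^+ 2 / 2))|%N.

Let ln2_gt0 : 0 < ln (2 / eps).
Proof. by apply: ln_gt0; rewrite ltr_pdivlMr // mul1r (lt_trans eps_lt1) ?ltr1n. Qed.

Let ln4_gt0 : 0 < ln (4 / eps).
Proof. by apply: ln_gt0; rewrite ltr_pdivlMr // mul1r (lt_trans eps_lt1) ?ltr1n. Qed.

Lemma ln_le_gauss_terms : ln (2 / eps) <= gauss_terms%:R.
Proof. by apply: le_trans (absz_ceil_ge _); rewrite le_max lexx. Qed.

Lemma gauss_terms_ge : k ^+ 2 / 2 * expR 1 ^+ 2 <= gauss_terms%:R.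
Proof.
apply: le_trans (absz_ceil_ge _); rewrite le_max; apply/orP; right.
by rewrite mulrAC.
Qed.

Lemma gauss_terms_gt0 : (0 < gauss_terms)%N.
Proof. by rewrite -(ltr0n R); apply: lt_le_trans ln_le_gauss_terms. Qed.

Lemma expRN_gauss_terms_le : expR (- gauss_terms%:R) <= eps / 2.
Proof.
rewrite -[leRHS]lnK ?posrE ?divr_gt0 // -[eps / 2]invf_div lnV ?posrE ?divr_gt0 //.
by rewrite ler_expR lerN2 ln_le_gauss_terms.
Qed.

Lemma gauss_deg_sqr_ge : 8 * gauss_terms%:R * ln (4 / eps) <= (gauss_deg k eps)%:R ^+ 2.
Proof.
have b_eq : gauss_terms%:R
    = (Num.ceil (Num.max (ln (2 / eps)) (k ^+ 2 * expR 1 ^+ 2 / 2)))%:~R :> R.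
  by rewrite natr_absz ger0_norm // ceil_ge0 lt_max (lt_trans _ ln2_gt0) ?ltrN10.
have b_ge0 : 0 <= 8 * gauss_terms%:R * ln (4 / eps) :> R.
  by rewrite mulr_ge0 ?mulr_ge0 ?(ltW ln4_gt0).
rewrite -[leLHS]sqr_sqrtr // lerXn2r ?nnegrE ?sqrtr_ge0 //.
by rewrite b_eq; exact: absz_ceil_ge.
Qed.

Lemma gauss_deg_tail_le i : (0 < i <= gauss_terms)%N ->
  2 * expR (- ((gauss_deg k eps)%:R / 2) ^+ 2 / (2 * i%:R)) <= eps / 2.
Proof.
case/andP=> i_gt0 i_le.
have i_gt0R : 0 < i%:R :> R by rewrite ltr0n.
suff : expR (- ((gauss_deg k eps)%:R / 2) ^+ 2 / (2 * i%:R)) <= eps / 4 by lra.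
rewrite -[eps / 4]invf_div -[4 / eps]lnK ?posrE ?divr_gt0 // -expRN ler_expR.
rewrite mulNr lerN2 ler_pdivlMr ?mulr_gt0 // expr_div_n ler_pdivlMr ?exprn_gt0 //.
apply: le_trans gauss_deg_sqr_ge.
have i_leR : i%:R <= gauss_terms%:R :> R by rewrite ler_nat.
have := ln4_gt0; nra.
Qed.

End gauss_degree.

Theorem lemma9 (R : realType) (k eps : R) (heps0 : 0 < eps) (heps1 : eps < 1) :
  exists p : {poly R},
    (size p <= (gauss_deg k eps).+1)%N /\
    (forall x : R, -1 <= x <= 1 -> `| p.[x] - expR (- (k * x) ^+ 2) | <= eps).
Proof.
set b := gauss_terms k eps; set n := gauss_deg k eps; set lam := k ^+ 2 / 2.
exists (gauss_poly lam b n); split => [|x x_in]; first exact: size_gauss_poly.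
have lam_ge0 : 0 <= lam by rewrite divr_ge0 ?sqr_ge0.
have tail_le i : (0 < i < b)%N -> 2 * expR (- (n%:R / 2) ^+ 2 / (2 * i%:R)) <= eps / 2.
  by case/andP=> i_gt0 /ltnW i_le; apply: gauss_deg_tail_le => //; rewrite i_gt0.
have half_eps_ge0 : 0 <= eps / 2 by rewrite divr_ge0 // ltW.
have := gauss_poly_err lam_ge0 (gauss_terms_gt0 k heps0 heps1) (gauss_terms_ge k eps)
  half_eps_ge0 tail_le x_in.
have -> : - (2 * lam) * x ^+ 2 = - (k * x) ^+ 2 by rewrite /lam; field.
move/le_trans; apply; rewrite [leRHS]splitr lerD2l.
exact: expRN_gauss_terms_le.
Qed.
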